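(* Let $n>2$ and $1<p<\infty$. Let $\Delta_n=\{\mathbf{s}\in\mathbb{R}^n: s_i\ge0\ \forall i,\ \sum_i s_i=1\}$ and for $\mathbf{s}\in\Delta_n$ let $M(\mathbf{s})=\operatorname{Diag}(\mathbf{s})-\mathbf{s}\mathbf{s}^\top\in\mathbb{R}^{n\times n}$. Then for $\mathbf{s}\in\Delta_n$, $\|M(\mathbf{s})\|_p=\tfrac12$ if and only if $\mathbf{s}$ is a coordinate permutation of $(1/2,1/2,0,\dots,0)$.
   Context: For $p\in[1,\infty)$, $\|\mathbf{x}\|_p=(\sum_i|x_i|^p)^{1/p}$; for a square matrix $A$, $\|A\|_p=\sup_{\mathbf{v}\ne0}\|A\mathbf{v}\|_p/\|\mathbf{v}\|_p$ is the induced operator norm. $\operatorname{Diag}(\mathbf{s})$ is the diagonal matrix with diagonal $\mathbf{s}$. *)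

From HB Require Import structures.
From mathcomp Require Import all_boot all_order all_algebra.
From mathcomp Require Import perm.
From mathcomp Require Import all_classical all_reals all_analysis.
Set Implicit Arguments. Unset Strict Implicit. Unset Printing Implicit Defensive.
Import Order.TTheory GRing.Theory Num.Theory.
Local Open Scope classical_set_scope.
Local Open Scope ring_scope.

Definition pnorm (R : realType) (n : nat) (p : R) (x : 'cV[R]_n) : R :=
  (\sum_(i < n) `|x i 0| `^ p) `^ p^-1.

Definition opnorm (R : realType) (n : nat) (p : R) (A : 'M[R]_n) : R :=
  sup [set r : R | exists v : 'cV[R]_n, v != 0 /\ r = pnorm p (A *m v) / pnorm p v].

Definition in_simplex (R : realType) (n : nat) (s : 'cV[R]_n) : Prop :=
  (forall i, 0 <= s i 0) /\ \sum_(i < n) s i 0 = 1.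

Definition Mmat (R : realType) (n : nat) (s : 'cV[R]_n) : 'M[R]_n :=
  diag_mx s^T - s *m s^T.

Definition half_half (R : realType) (n : nat) : 'cV[R]_n :=
  \col_(i < n) (if (i < 2)%N then 2^-1 else 0).

From HB Require Import structures.
From mathcomp Require Import all_boot all_order all_algebra.
From mathcomp Require Import perm.
From mathcomp Require Import all_classical all_reals all_analysis.
From mathcomp.algebra_tactics Require Import ring lra.
Set Implicit Arguments.
Unset Strict Implicit.
Unset Printing Implicit Defensive.
Import Order.TTheory GRing.Theory Num.Theory.
Local Open Scope ring_scope.

(* With row sums r_i = sum_k |A_ik|, Jensen's inequality for t |-> t^p with
   weights |A_ij| gives the Schur-type bound
     ||A v||_p^p <= (max_j sum_i r_i^(p-1) |A_ij|) ||v||_p^p.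
   The matrix M(s) is symmetric with |M_ij| = s_i s_j off the diagonal and
   s_i (1 - s_i) on it, so its row sums are r_i = 2 s_i (1 - s_i) <= 1/2, with
   equality iff s_i = 1/2.  Hence every column weight is at most (1/2)^p and
   ||M(s)||_p <= 1/2.  If no two coordinates equal 1/2, then in every column j
   either r_j < 1/2, or s_j = 1/2 and some i <> j has 0 < s_i <> 1/2, whose
   smaller row sum r_i enters the weight of column j with the positive factor
   s_i s_j; all column weights are then < (1/2)^p and ||M(s)||_p < 1/2.
   Conversely, if s_a = s_b = 1/2 then e_a - e_b is an eigenvector of M(s)
   for the eigenvalue 1/2. *)

Lemma ler_lt_sum (R : numDomainType) (I : finType) (F G : I -> R) (i : I) :
  (forall k, F k <= G k) -> F i < G i -> \sum_k F k < \sum_k G k.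
Proof.
move=> FG FGi; rewrite (bigD1 i) //= [X in _ < X](bigD1 i) //=.
by apply: ltr_leD => //; apply: ler_sum => k _.
Qed.

Lemma exists_perm2 (T : finType) (a b c d : T) :
  a != b -> c != d -> exists sigma : {perm T}, sigma a = c /\ sigma b = d.
Proof.
move=> ab cd; pose b' := tperm a c b.
have b'c : b' != c by rewrite -[c in _ != c](tpermL a c) (inj_eq perm_inj) eq_sym.
by exists (tperm a c * tperm b' d)%g; rewrite !permM -/b' !tpermL tpermD // eq_sym.
Qed.

Section PowerMean.
Variable R : realType.

Lemma powRK (p x : R) : p != 0 -> 0 <= x -> (x `^ p) `^ p^-1 = x.
Proof. by move=> p_neq0 x0; rewrite -powRrM mulfV // powRr1. Qed.

(* Young's inequality for the conjugate exponents p and p/(p-1). *)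
Lemma powR_tangent_le (p t m : R) : 1 < p -> 0 <= t -> 0 <= m ->
  p * t * m `^ (p - 1) - (p - 1) * m `^ p <= t `^ p.
Proof.
move=> p1 t0 m0; have p0 : 0 < p by apply: lt_trans p1.
pose q := p / (p - 1).
have q0 : 0 < q by rewrite divr_gt0 // subr_gt0.
have pq : p^-1 + q^-1 = 1 by rewrite /q invf_div; field; rewrite gt_eqF ?subr_gt0.
have := conjugate_powR t0 (powR_ge0 m (p - 1)) p0 q0 pq.
rewrite -powRrM (_ : (p - 1) * q = p); last by rewrite /q; field; rewrite gt_eqF ?subr_gt0.
move=> /(ler_wpM2l (ltW p0)).
rewrite (_ : p * (t `^ p / p + m `^ p / q) = t `^ p + (p - 1) * m `^ p); first lra.
by rewrite /q; field; rewrite ?gt_eqF ?subr_gt0.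
Qed.

Lemma jensen_powR (I : finType) (a x : I -> R) (p : R) :
  1 < p -> (forall i, 0 <= a i) -> (forall i, 0 <= x i) ->
  (\sum_i a i * x i) `^ p <= (\sum_i a i) `^ (p - 1) * \sum_i a i * x i `^ p.
Proof.
move=> p1 a0 x0; have p0 : 0 < p by apply: lt_trans p1.
set r := \sum_i a i; set S := \sum_i a i * x i.
have S0 : 0 <= S by apply: sumr_ge0 => i _; rewrite mulr_ge0.
have r0 : 0 <= r by apply: sumr_ge0.
have [r_eq0|r_neq0] := eqVneq r 0.
  have -> : S = 0.
    by apply: big1 => i _; rewrite (psumr_eq0P (fun i _ => a0 i) r_eq0) ?mul0r.
  rewrite powR0 ?gt_eqF // mulr_ge0 ?powR_ge0 //.
  by apply: sumr_ge0 => i _; rewrite mulr_ge0 ?powR_ge0.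
have r_gt0 : 0 < r by rewrite lt_neqAle eq_sym r_neq0.
pose m := S / r.
have m0 : 0 <= m by rewrite divr_ge0.
have Sm : S = r * m by rewrite /m mulrC divfK.
have tangent_sum : r * m `^ p <= \sum_i a i * x i `^ p.
  apply: le_trans (_ : \sum_i a i * (p * x i * m `^ (p - 1) - (p - 1) * m `^ p) <= _).
    rewrite (eq_bigr (fun i => p * m `^ (p - 1) * (a i * x i) - (p - 1) * m `^ p * a i));
      last by move=> i _; ring.
    rewrite sumrB -!mulr_sumr -/S -/r Sm.
    rewrite (_ : p * m `^ (p - 1) * (r * m) = p * r * (m * m `^ (p - 1))); last by ring.
    rewrite mulr_powRB1 //; lra.
  by apply: ler_sum => i _; apply: ler_wpM2l => //; apply: powR_tangent_le.
rewrite Sm powRM // -[in X in X <= _]mulr_powRB1 // -mulrA mulrCA.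
by apply: ler_wpM2l => //; apply: powR_ge0.
Qed.

End PowerMean.

Section SchurBound.
Variables (R : realType) (n : nat) (p : R).
Hypothesis p_gt1 : 1 < p.

Let p_gt0 : 0 < p. Proof. exact: lt_trans p_gt1. Qed.

Definition schur_weight (A : 'M[R]_n) (j : 'I_n) : R :=
  \sum_i (\sum_k `|A i k|) `^ (p - 1) * `|A i j|.

Lemma pnorm_gt0 (v : 'cV[R]_n) : v != 0 -> 0 < pnorm p v.
Proof.
move=> v_neq0; rewrite /pnorm powR_gt0 //.
have [i vi_neq0] : exists i, v i 0 != 0.
  apply/existsP; apply: contraR v_neq0 => /existsPn v0.
  by apply/eqP/matrixP => i j; rewrite ord1 mxE; apply/eqP/negbNE.
rewrite (bigD1 i) //= ltr_pwDl ?powR_gt0 ?normr_gt0 //.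
by apply: sumr_ge0 => j _; apply: powR_ge0.
Qed.

Lemma pnormZ (c : R) (v : 'cV[R]_n) : 0 <= c -> pnorm p (c *: v) = c * pnorm p v.
Proof.
move=> c0; rewrite /pnorm.
rewrite (eq_bigr (fun j => c `^ p * `|v j 0| `^ p)); last first.
  by move=> j _; rewrite mxE normrM (ger0_norm c0) powRM.
have S0 : 0 <= \sum_j `|v j 0| `^ p by apply: sumr_ge0 => j _; apply: powR_ge0.
by rewrite -mulr_sumr powRM ?powR_ge0 // powRK ?gt_eqF.
Qed.

Lemma sum_powR_mulmx_le (A : 'M[R]_n) (K : R) (v : 'cV[R]_n) :
  (forall j, schur_weight A j <= K) ->
  \sum_i `|(A *m v) i 0| `^ p <= K * \sum_j `|v j 0| `^ p.
Proof.
move=> AK.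
apply: le_trans (_ : \sum_i (\sum_k `|A i k|) `^ (p - 1) *
    \sum_j `|A i j| * `|v j 0| `^ p <= _).
  apply: ler_sum => i _; rewrite mxE.
  apply: le_trans (jensen_powR p_gt1 (fun j => normr_ge0 (A i j))
                                      (fun j => normr_ge0 (v j 0))).
  apply: ge0_ler_powR; rewrite ?nnegrE ?(ltW p_gt0) //.
    by apply: sumr_ge0 => j _; rewrite mulr_ge0.
  by apply: le_trans (ler_norm_sum _ _ _) _; apply: ler_sum => j _; rewrite normrM.
under eq_bigr do rewrite mulr_sumr.
rewrite exchange_big /= mulr_sumr; apply: ler_sum => j _.
under eq_bigr do rewrite mulrA.
by rewrite -mulr_suml ler_wpM2r ?powR_ge0 ?AK.
Qed.

Lemma pnorm_mulmx_le (A : 'M[R]_n) (K : R) (v : 'cV[R]_n) :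
  0 <= K -> (forall j, schur_weight A j <= K) ->
  pnorm p (A *m v) <= K `^ p^-1 * pnorm p v.
Proof.
move=> K0 AK; have sum_ge0 (w : 'cV[R]_n) : 0 <= \sum_i `|w i 0| `^ p.
  by apply: sumr_ge0 => i _; apply: powR_ge0.
rewrite /pnorm -powRM //; apply: ge0_ler_powR.
- by rewrite invr_ge0 ltW.
- exact: sum_ge0.
- by rewrite nnegrE mulr_ge0.
- exact: sum_powR_mulmx_le.
Qed.

Lemma pnorm_ratio_le (A : 'M[R]_n) (K : R) (v : 'cV[R]_n) :
  0 <= K -> (forall j, schur_weight A j <= K) -> v != 0 ->
  pnorm p (A *m v) / pnorm p v <= K `^ p^-1.
Proof.
by move=> K0 AK v_neq0; rewrite ler_pdivrMr ?pnorm_gt0 ?pnorm_mulmx_le.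
Qed.

Lemma opnorm_le (A : 'M[R]_n) (K : R) :
  (0 < n)%N -> 0 <= K -> (forall j, schur_weight A j <= K) ->
  opnorm p A <= K `^ p^-1.
Proof.
move=> n_gt0 K0 AK; apply: ge_sup; last first.
  by move=> r [v [v_neq0 ->]]; apply: pnorm_ratio_le.
pose one : 'cV[R]_n := const_mx 1.
have one_neq0 : one != 0.
  by apply/eqP => /matrixP /(_ (Ordinal n_gt0) 0) /eqP; rewrite !mxE oner_eq0.
by exists (pnorm p (A *m one) / pnorm p one), one.
Qed.

Lemma pnorm_ratio_le_opnorm (A : 'M[R]_n) (v : 'cV[R]_n) :
  v != 0 -> pnorm p (A *m v) / pnorm p v <= opnorm p A.
Proof.
move=> v_neq0; pose K := \big[Order.max/0]_j schur_weight A j.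
have K0 : 0 <= K by apply: bigmax_ge_id.
have AK j : schur_weight A j <= K by apply: le_bigmax.
apply: ub_le_sup; last by exists v.
by exists (K `^ p^-1) => r [w [w_neq0 ->]]; apply: pnorm_ratio_le.
Qed.

End SchurBound.

Lemma mul2_onem_le_half (R : realFieldType) (x : R) : 2 * x * (1 - x) <= 2^-1.
Proof. by have := sqr_ge0 (2 * x - 1); rewrite expr2 => ?; nra. Qed.

Lemma mul2_onem_lt_half (R : realFieldType) (x : R) :
  x != 2^-1 -> 2 * x * (1 - x) < 2^-1.
Proof.
move=> x_neq_half; have : 0 < (2 * x - 1) ^+ 2.
  rewrite lt0r sqr_ge0 andbT sqrf_eq0 subr_eq0.
  by apply: contra x_neq_half => /eqP ?; apply/eqP; lra.
by rewrite expr2 => ?; nra.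
Qed.

Section Simplex.
Variables (R : realType) (n : nat) (s : 'cV[R]_n).
Hypothesis s_simplex : in_simplex s.

Definition two_halves := exists a b : 'I_n, [/\ a != b, s a 0 = 2^-1 & s b 0 = 2^-1].

Lemma simplex_ge0 i : 0 <= s i 0.
Proof. by case: s_simplex. Qed.

Lemma simplex_le1 i : s i 0 <= 1.
Proof.
case: s_simplex => s0 <-; rewrite (bigD1 i) //= lerDl.
by apply: sumr_ge0 => j _.
Qed.

Lemma simplex_other_gt0 j : s j 0 < 1 -> exists2 i, i != j & 0 < s i 0.
Proof.
move=> sj_lt1; apply/exists_inP; apply: contraLR sj_lt1 => /exists_inPn s0.
have [_ <-] := s_simplex; rewrite (bigD1 j) //= big1 ?addr0 ?ltxx // => i ij.
by apply/eqP; rewrite eq_le simplex_ge0 andbT leNgt s0.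
Qed.

Lemma simplex_two_halves_eq0 a b k : a != b -> s a 0 = 2^-1 -> s b 0 = 2^-1 ->
  k != a -> k != b -> s k 0 = 0.
Proof.
move=> ab sa sb ka kb.
have rest0 : \sum_(i | (i != a) && (i != b)) s i 0 = 0.
  have [_] := s_simplex; rewrite (bigD1 a) //= (bigD1 b) 1?eq_sym //= sa sb.
  by under eq_bigl do rewrite andbC; lra.
by apply: (psumr_eq0P _ rest0); rewrite ?ka ?kb // => i _; apply: simplex_ge0.
Qed.

Lemma half_half_perm_of_two_halves : (1 < n)%N -> two_halves ->
  exists sigma : {perm 'I_n}, forall i, s i 0 = half_half R n (sigma i) 0.
Proof.
move=> n_gt1 [a [b [ab sa sb]]].
pose i0 := Ordinal (ltnW n_gt1); pose i1 := Ordinal n_gt1.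
have [sigma [sa0 sb1]] := @exists_perm2 _ a b i0 i1 ab isT.
exists sigma => i; rewrite mxE.
have [->|ia] := eqVneq i a; first by rewrite sa0.
have [->|ib] := eqVneq i b; first by rewrite sb1.
rewrite (simplex_two_halves_eq0 ab sa sb ia ib).
case: ifP => // sigma_i_lt2; exfalso.
have /orP[/eqP sigma_i0|/eqP sigma_i1] : (sigma i == i0) || (sigma i == i1).
  by rewrite -!val_eqE /=; case: (nat_of_ord (sigma i)) sigma_i_lt2 => [|[|]].
- by case/eqP: ia; apply: (@perm_inj _ sigma); rewrite sigma_i0 sa0.
- by case/eqP: ib; apply: (@perm_inj _ sigma); rewrite sigma_i1 sb1.
Qed.

End Simplex.

Lemma two_halves_of_half_half_perm (R : realType) (n : nat) (s : 'cV[R]_n) :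
  (1 < n)%N -> (exists sigma : {perm 'I_n}, forall i, s i 0 = half_half R n (sigma i) 0) ->
  two_halves s.
Proof.
move=> n_gt1 [sigma s_sigma].
pose a := (sigma^-1)%g (Ordinal (ltnW n_gt1)); pose b := (sigma^-1)%g (Ordinal n_gt1).
exists a, b; split; rewrite ?s_sigma ?permKV ?mxE //.
by apply/eqP => /perm_inj.
Qed.

Section Mmat.
Variables (R : realType) (n : nat) (s : 'cV[R]_n).

Lemma Mmat_entry i j : Mmat s i j = (i == j)%:R * s i 0 - s i 0 * s j 0.
Proof. by rewrite /Mmat !mxE big_ord1 !mxE mulr_natl. Qed.

Lemma tr_Mmat : (Mmat s)^T = Mmat s.
Proof. by rewrite /Mmat linearB /= tr_diag_mx trmx_mul trmxK. Qed.

Lemma norm_Mmat_sym i j : `|Mmat s i j| = `|Mmat s j i|.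
Proof. by rewrite -[in LHS]tr_Mmat mxE. Qed.

Lemma Mmat_mul_two_halves a b : a != b -> s a 0 = 2^-1 -> s b 0 = 2^-1 ->
  Mmat s *m (delta_mx a 0 - delta_mx b 0) = 2^-1 *: (delta_mx a 0 - delta_mx b 0) :> 'cV_n.
Proof.
move=> ab sa sb; apply/matrixP => i j.
rewrite ord1 mulmxBr -!colE [Mmat s]lock !mxE -lock !Mmat_entry sa sb.
have [->|ia] := eqVneq i a; first by rewrite (negbTE ab) sa; ring.
by have [->|ib] := eqVneq i b; rewrite ?sb /=; ring.
Qed.

Hypothesis s_simplex : in_simplex s.
Let s_ge0 := simplex_ge0 s_simplex.
Let s_le1 := simplex_le1 s_simplex.

Lemma norm_Mmat i j :
  `|Mmat s i j| = s i 0 * ((i == j)%:R * (1 - 2 * s i 0) + s j 0).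
Proof.
rewrite Mmat_entry.
have [<-|ij] := eqVneq i j; last by rewrite /= !mul0r !add0r normrN ger0_norm ?mulr_ge0.
rewrite /= ger0_norm; first ring.
by rewrite mul1r -{1}(mulr1 (s i 0)) -mulrBr mulr_ge0 ?subr_ge0.
Qed.

Lemma Mmat_row_norm_sum i : \sum_j `|Mmat s i j| = 2 * s i 0 * (1 - s i 0).
Proof.
have [_ s_sum1] := s_simplex.
rewrite (eq_bigr _ (fun j _ => norm_Mmat i j)) -mulr_sumr big_split /= s_sum1.
rewrite (bigD1 i) //= eqxx big1 ?addr0 => [|j]; first by rewrite /=; ring.
by rewrite eq_sym => /negbTE ->; rewrite mul0r.
Qed.

Variable p : R.
Hypothesis p_gt1 : 1 < p.

Let p_gt0 : 0 < p. Proof. exact: lt_trans p_gt1. Qed.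

Let powR_half_split : (2^-1 : R) `^ p = (2^-1) `^ (p - 1) * 2^-1.
Proof. by rewrite mulrC mulr_powRB1 ?invr_ge0. Qed.

Lemma Mmat_row_powR_le i :
  (\sum_k `|Mmat s i k|) `^ (p - 1) <= (2^-1) `^ (p - 1).
Proof.
rewrite Mmat_row_norm_sum ge0_ler_powR ?nnegrE ?subr_ge0 ?(ltW p_gt1) ?invr_ge0 //.
  by rewrite !mulr_ge0 ?subr_ge0 ?s_ge0 ?s_le1.
exact: mul2_onem_le_half.
Qed.

Lemma Mmat_row_powR_lt i : s i 0 != 2^-1 ->
  (\sum_k `|Mmat s i k|) `^ (p - 1) < (2^-1) `^ (p - 1).
Proof.
move=> si_neq_half.
rewrite Mmat_row_norm_sum gt0_ltr_powR ?nnegrE ?subr_gt0 ?invr_ge0 //.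
  by rewrite !mulr_ge0 ?subr_ge0 ?s_ge0 ?s_le1.
exact: mul2_onem_lt_half.
Qed.

Lemma sum_half_powR_Mmat j :
  \sum_i (2^-1) `^ (p - 1) * `|Mmat s i j| = (2^-1) `^ (p - 1) * (2 * s j 0 * (1 - s j 0)).
Proof.
by rewrite -mulr_sumr; under eq_bigr do rewrite norm_Mmat_sym; rewrite Mmat_row_norm_sum.
Qed.

Lemma schur_weight_Mmat_le j :
  schur_weight p (Mmat s) j <= (2^-1) `^ (p - 1) * (2 * s j 0 * (1 - s j 0)).
Proof.
by rewrite -sum_half_powR_Mmat; apply: ler_sum => i _; rewrite ler_wpM2r ?Mmat_row_powR_le.
Qed.

Lemma schur_weight_Mmat_le_half j : schur_weight p (Mmat s) j <= (2^-1) `^ p.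
Proof.
apply: le_trans (schur_weight_Mmat_le j) _.
by rewrite powR_half_split ler_wpM2l ?powR_ge0 ?mul2_onem_le_half.
Qed.

Lemma schur_weight_Mmat_lt_half j :
  ~ two_halves s -> schur_weight p (Mmat s) j < (2^-1) `^ p.
Proof.
move=> no_halves; have half_pow_gt0 : (0 : R) < (2^-1) `^ (p - 1) by rewrite powR_gt0.
have [sj_half|sj_neq_half] := eqVneq (s j 0) 2^-1; last first.
  apply: le_lt_trans (schur_weight_Mmat_le j) _.
  by rewrite powR_half_split ltr_pM2l ?mul2_onem_lt_half.
have [i ij si_gt0] : exists2 i, i != j & 0 < s i 0.
  by apply: simplex_other_gt0 => //; rewrite sj_half; lra.
have si_neq_half : s i 0 != 2^-1.
  by apply/eqP => si_half; apply: no_halves; exists i, j.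
have row_sum_j : 2 * s j 0 * (1 - s j 0) = 2^-1 by rewrite sj_half; field.
rewrite powR_half_split -[X in _ < _ * X]row_sum_j -sum_half_powR_Mmat.
apply: (ler_lt_sum (i := i)) => [k|].
  by rewrite ler_wpM2r ?Mmat_row_powR_le.
rewrite ltr_pM2r ?Mmat_row_powR_lt // norm_Mmat (negbTE ij) mul0r add0r.
by rewrite mulr_gt0 // sj_half.
Qed.

Lemma opnorm_Mmat_le_half : (0 < n)%N -> opnorm p (Mmat s) <= 2^-1.
Proof.
move=> n_gt0; rewrite -(@powRK _ p 2^-1) ?gt_eqF ?invr_ge0 //.
by apply: (opnorm_le p_gt1 n_gt0); [apply: powR_ge0 | apply: schur_weight_Mmat_le_half].
Qed.

Lemma opnorm_Mmat_lt_half : (0 < n)%N -> ~ two_halves s -> opnorm p (Mmat s) < 2^-1.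
Proof.
move=> n_gt0 no_halves; pose K := \big[Order.max/0]_j schur_weight p (Mmat s) j.
have K_ge0 : 0 <= K by apply: bigmax_ge_id.
have K_lt : K < (2^-1) `^ p.
  by apply: bigmax_lt; rewrite ?powR_gt0 // => j _; apply: schur_weight_Mmat_lt_half.
apply: le_lt_trans (opnorm_le p_gt1 n_gt0 K_ge0 (fun j => le_bigmax _ _ j)) _.
rewrite -[X in _ < X](@powRK _ p 2^-1) ?gt_eqF ?invr_ge0 //.
by rewrite gt0_ltr_powR ?nnegrE ?invr_gt0 ?powR_ge0.
Qed.

Lemma opnorm_Mmat_ge_half : two_halves s -> 2^-1 <= opnorm p (Mmat s).
Proof.
move=> [a [b [ab sa sb]]]; pose v : 'cV[R]_n := delta_mx a 0 - delta_mx b 0.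
have v_neq0 : v != 0.
  apply/eqP => /matrixP /(_ a 0) /eqP; rewrite !mxE eqxx (negbTE ab) subr0.
  by rewrite oner_eq0.
apply: le_trans (pnorm_ratio_le_opnorm p_gt1 _ v_neq0).
by rewrite Mmat_mul_two_halves // pnormZ ?invr_ge0 // mulfK ?gt_eqF ?pnorm_gt0.
Qed.

End Mmat.

Theorem lemma4 (R : realType) (n : nat) (p : R) (s : 'cV[R]_n) :
  (2 < n)%N -> 1 < p -> in_simplex s ->
  (opnorm p (Mmat s) = 2^-1 <->
   exists sigma : {perm 'I_n}, forall i : 'I_n, s i 0 = half_half R n (sigma i) 0).
Proof.
move=> n_gt2 p_gt1 s_simplex; have n_gt1 : (1 < n)%N := ltnW n_gt2.
split=> [opnorm_half | /(two_halves_of_half_half_perm n_gt1) halves].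
  apply: half_half_perm_of_two_halves => //; apply: contrapT => no_halves.
  have := opnorm_Mmat_lt_half s_simplex p_gt1 (ltnW n_gt1) no_halves.
  by rewrite opnorm_half ltxx.
apply/eqP; rewrite eq_le opnorm_Mmat_le_half ?(ltnW n_gt1) //=.
exact: opnorm_Mmat_ge_half.
Qed.
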